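(* Let $\lambda>0$, $\mathbf{A}\in\mathbb{R}^{m\times n}$ with columns $\mathbf{a}_1,\dots,\mathbf{a}_n$, let $f:\mathbb{R}^m\to\mathbb{R}\cup\{+\infty\}$ be proper, closed and convex, and let $h:\mathbb{R}\to\mathbb{R}\cup\{+\infty\}$ be proper, closed and convex with $0\in\mathrm{dom}(h)$, $h(0)=0$, and $0$ an accumulation point of $\mathrm{dom}(h)$. Let $\nu=(\mathcal{S}_0,\mathcal{S}_1,\mathcal{S}_\bullet)$ and $\nu'=(\mathcal{S}_0',\mathcal{S}_1',\mathcal{S}_\bullet')$ be partitions of $\{1,\dots,n\}$ with $\mathcal{S}_0\subseteq\mathcal{S}_0'$ and $\mathcal{S}_1\subseteq\mathcal{S}_1'$. Then for all $\mathbf{u}\in\mathbb{R}^m$, $$D^{\nu'}(\mathbf{u})=D^\nu(\mathbf{u})+\sum_{i\in\mathcal{S}_0'\setminus\mathcal{S}_0}\phi_0(\mathbf{a}_i^\top\mathbf{u})+\sum_{i\in\mathcal{S}_1'\setminus\mathcal{S}_1}\phi_1(\mathbf{a}_i^\top\mathbf{u}).$$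
   Context: $\|\mathbf{x}\|_0$ is the number of nonzero entries of $\mathbf{x}$; $\eta(\text{condition})=0$ if the condition holds and $+\infty$ otherwise; $\omega^*$ denotes the convex conjugate of a function $\omega$. An accumulation point $0$ of a set $\mathcal{C}\subseteq\mathbb{R}$: every neighborhood of $0$ contains a point of $\mathcal{C}$ other than $0$. For a partition $\nu=(\mathcal{S}_0,\mathcal{S}_1,\mathcal{S}_\bullet)$ of $\{1,\dots,n\}$: $\mathcal{X}^\nu=\{\mathbf{x}\in\mathbb{R}^n: x_i=0\ \forall i\in\mathcal{S}_0,\ x_i\neq0\ \forall i\in\mathcal{S}_1\}$; $g^\nu(\mathbf{x})=\lambda\|\mathbf{x}\|_0+\sum_{i=1}^n h(x_i)+\eta(\mathbf{x}\in\mathcal{X}^\nu)$; and $D^\nu(\mathbf{u})=-f^*(-\mathbf{u})-(g^\nu)^*(\mathbf{A}^\top\mathbf{u})$ for $\mathbf{u}\in\mathbb{R}^m$. The functions $\phi_0,\phi_1:\mathbb{R}\to\mathbb{R}\cup\{+\infty\}$ are $\phi_0(v)=\max(h^*(v)-\lambda,0)$ and $\phi_1(v)=\max(\lambda-h^*(v),0)$.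
   Formalization: The identity is claimed only for those u with $D^\nu(\mathbf{u})\neq-\infty$ or $\sum_{i\in\mathcal{S}_0'\setminus\mathcal{S}_0}\phi_0(\mathbf{a}_i^\top\mathbf{u})\neq+\infty$, not for all u ∈ ℝᵐ. The statement above fails without it. *)

From mathcomp Require Import all_boot all_order all_algebra.
From mathcomp Require Import all_classical all_reals.
From mathcomp Require Import ereal.
Set Implicit Arguments. Unset Strict Implicit. Unset Printing Implicit Defensive.
Import Order.TTheory GRing.Theory Num.Theory.
Local Open Scope ring_scope.
Local Open Scope ereal_scope.


Section Defs.
Variable R : realType.

Definition dotv (k : nat) (v x : 'cV[R]_k) : R := (\sum_(i < k) v i ord0 * x i ord0)%R.

Definition conjv (k : nat) (w : 'cV[R]_k -> \bar R) (v : 'cV[R]_k) : \bar R :=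
  ereal_sup (range (fun x => (dotv v x)%:E - w x)).
Definition conj1 (w : R -> \bar R) (v : R) : \bar R :=
  ereal_sup (range (fun x => (v * x)%:E - w x)).

Definition properv (k : nat) (w : 'cV[R]_k -> \bar R) :=
  (forall x, w x != -oo) /\ (exists x, w x < +oo).
Definition proper1 (w : R -> \bar R) :=
  (forall x, w x != -oo) /\ (exists x, w x < +oo).

(* closed = lower semicontinuous (for proper functions), sup-norm neighbourhoods *)
Definition closedv (k : nat) (w : 'cV[R]_k -> \bar R) :=
  forall x (a : R), a%:E < w x ->
    exists2 d : R, (0 < d)%R & forall y : 'cV[R]_k, (forall j, `|y j ord0 - x j ord0| < d)%R -> a%:E < w y.
Definition closed1 (w : R -> \bar R) :=
  forall x (a : R), a%:E < w x ->
    exists2 d : R, (0 < d)%R & forall y, (`|y - x| < d)%R -> a%:E < w y.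

Definition convexv (k : nat) (w : 'cV[R]_k -> \bar R) :=
  forall x y (t : R), (0 < t < 1)%R ->
    w (t *: x + (1 - t) *: y)%R <= t%:E * w x + (1 - t)%:E * w y.
Definition convex1 (w : R -> \bar R) :=
  forall x y (t : R), (0 < t < 1)%R ->
    w (t * x + (1 - t) * y)%R <= t%:E * w x + (1 - t)%:E * w y.

Definition dom1 (w : R -> \bar R) : set R := fun x => w x < +oo.

Definition accum0 (C : set R) :=
  forall e : R, (0 < e)%R -> exists x, C x /\ x != 0%R /\ (`|x| < e)%R.

Definition partition3 (n : nat) (S0 S1 Sb : {set 'I_n}) :=
  [/\ [disjoint S0 & S1], [disjoint S0 & Sb], [disjoint S1 & Sb]
    & S0 :|: S1 :|: Sb = [set: 'I_n]%SET].

Definition l0norm (n : nat) (x : 'cV[R]_n) : nat := #|[set i : 'I_n | x i ord0 != 0%R]|.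

Definition eta_X (n : nat) (S0 S1 : {set 'I_n}) (x : 'cV[R]_n) : \bar R :=
  if [forall i : 'I_n, ((i \in S0) ==> (x i ord0 == 0%R)) && ((i \in S1) ==> (x i ord0 != 0%R))]
  then 0 else +oo.

Definition g_nu (n : nat) (lam : R) (h : R -> \bar R) (S0 S1 : {set 'I_n})
  (x : 'cV[R]_n) : \bar R :=
  (lam * (l0norm x)%:R)%:E + (\sum_(i < n) h (x i ord0)) + eta_X S0 S1 x.

Definition D_nu (m n : nat) (A : 'M[R]_(m, n)) (f : 'cV[R]_m -> \bar R)
  (lam : R) (h : R -> \bar R) (S0 S1 : {set 'I_n}) (u : 'cV[R]_m) : \bar R :=
  - conjv f (- u)%R - conjv (g_nu lam h S0 S1) (A^T *m u)%R.

Definition phi0 (lam : R) (h : R -> \bar R) (v : R) : \bar R :=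
  maxe (conj1 h v - lam%:E) 0.
Definition phi1 (lam : R) (h : R -> \bar R) (v : R) : \bar R :=
  maxe (lam%:E - conj1 h v) 0.

End Defs.

(* g^nu is separable: g^nu(x) = sum_i g_i(x_i) with
   g_i(y) = lam [y <> 0] + h(y) + eta_i(y), so (g^nu)^* is the sum of the scalar
   conjugates g_i^*.  These are 0 on S0, h^*(v) - lam on S1 and
   max(h^*(v) - lam, 0) on S_bullet.  The S1 case rests on
   sup_{y <> 0} (v y - h(y)) = h^*(v): the only missing point is y = 0, and
   since 0 is an accumulation point of dom h there is some x <> 0 in dom h, with
   h(t x) <= t h(x) -> 0 as t -> 0 by convexity and h(0) = 0.
   Refining nu to nu' moves indices of S_bullet either to S0', dropping
   max(h^* - lam, 0) = phi0, or to S1', replacing it by h^* - lam, where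
   max(a, 0) = a + max(-a, 0) leaves phi1. *)

From mathcomp Require Import all_boot all_order all_algebra.
From mathcomp Require Import all_classical all_reals.
From mathcomp Require Import ereal.
From mathcomp Require Import lra.
Import Order.TTheory GRing.Theory Num.Theory.
Local Open Scope ring_scope.
Local Open Scope ereal_scope.

Section ErealSup.
Context {R : realType}.

Lemma ereal_sup_addr_le (T : Type) (F : T -> \bar R) (c S : \bar R) :
  (forall z, F z + c <= S) -> ereal_sup (range F) + c <= S.
Proof.
case: c => [r| |] FcS.
- by rewrite -leeBrDr //; apply/ereal_supP => _ [z _ <-]; rewrite leeBrDr.
- have [->|] := eqVneq (ereal_sup (range F)) -oo; first by rewrite leNye.
  rewrite -ltNye => /ereal_sup_gt [_ [z _ <-]] Fz.
  by move: (FcS z); rewrite addey ?gt_eqF // leye_eq => /eqP ->; rewrite leey.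
- by rewrite addeNy leNye.
Qed.

Lemma ereal_sup_addr (T : Type) (A : set T) (F : T -> \bar R) (r : R) :
  ereal_sup [set F x + r%:E | x in A] = ereal_sup (F @` A) + r%:E.
Proof.
apply/le_anti/andP; split.
  apply/ereal_supP => _ [x Ax <-]; rewrite leeD2r //.
  by apply: ereal_sup_ubound; exists x.
rewrite -leeBrDr //; apply/ereal_supP => _ [x Ax <-]; rewrite leeBrDr //.
by apply: ereal_sup_ubound; exists x.
Qed.

Lemma ereal_sup_if_eq (T : eqType) (t0 : T) (a : \bar R) (F : T -> \bar R) :
  ereal_sup (range (fun t => if t == t0 then a else F t)) =
  maxe a (ereal_sup (F @` [set t | t != t0])).
Proof.
apply/le_anti/andP; split.
  apply/ereal_supP => _ [t _ <-]; rewrite le_max; case: eqVneq => [_|tt0].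
    by rewrite lexx.
  by apply/orP; right; apply: ereal_sup_ubound; exists t.
rewrite ge_max; apply/andP; split.
  by apply: ereal_sup_ubound; exists t0 => //; rewrite eqxx.
apply/ereal_supP => _ [t tt0 <-].
by apply: ereal_sup_ubound; exists t => //; rewrite (negbTE tt0).
Qed.

Lemma ereal_sup_sum_separable (I : eqType) (T : Type) (t0 : T)
    (Q : I -> T -> \bar R) (r : seq I) : uniq r ->
  ereal_sup (range (fun y : I -> T => \sum_(i <- r) Q i (y i))) =
  \sum_(i <- r) ereal_sup (range (Q i)).
Proof.
elim: r => [_|a r IH /= /andP[ar ur]].
  rewrite big_nil; apply/le_anti/andP; split.
    by apply/ereal_supP => _ [y _ <-]; rewrite big_nil.
  by apply: ereal_sup_ubound; exists (fun=> t0) => //; rewrite big_nil.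
rewrite big_cons -(IH ur); apply/le_anti/andP; split.
  apply/ereal_supP => _ [y _ <-]; rewrite big_cons.
  by apply: leeD; apply: ereal_sup_ubound; [exists (y a)|exists y].
rewrite addeC; apply: ereal_sup_addr_le => y; rewrite addeC.
apply: ereal_sup_addr_le => z.
apply: ereal_sup_ubound; exists (fun j => if j == a then z else y j) => //.
rewrite big_cons eqxx; congr (_ + _); apply: eq_big_seq => i ir.
by case: eqP => // ia; move: ar; rewrite -ia ir.
Qed.

End ErealSup.

Section SeparableConjugate.
Context {R : realType}.

Lemma EFin_sum_sube (I : Type) (s : seq I) (a : I -> R) (k : I -> \bar R) :
  (forall i, k i != -oo) ->
  (\sum_(i <- s) a i)%:E - \sum_(i <- s) k i = \sum_(i <- s) ((a i)%:E - k i).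
Proof.
move=> kNy; rewrite -sumEFin -sumeN -?big_split // => i j _ _.
by rewrite /adde_def !negb_and !kNy !orbT.
Qed.

Lemma conjv_separable (n : nat) (k : 'I_n -> R -> \bar R) (v : 'cV[R]_n) :
  (forall i y, k i y != -oo) ->
  conjv (fun x => \sum_(i < n) k i (x i ord0)) v =
  \sum_(i < n) conj1 (k i) (v i ord0).
Proof.
move=> kNy; rewrite /conjv /conj1.
have -> : range (fun x => (dotv v x)%:E - \sum_(i < n) k i (x i ord0)) =
    range (fun y : 'I_n -> R =>
      \sum_(i <- index_enum 'I_n) ((v i ord0 * y i)%:E - k i (y i))).
  apply/seteqP; split => _ [x _ <-].
    by exists (fun i => x i ord0) => //; rewrite EFin_sum_sube.
  exists (\col_i x i) => //; rewrite EFin_sum_sube //.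
  by apply: eq_bigr => i _; rewrite mxE.
by rewrite (@ereal_sup_sum_separable _ _ _ 0%R
  (fun i t => (v i ord0 * t)%:E - k i t)) ?index_enum_uniq.
Qed.

Lemma conjv_neqNy (k : nat) (w : 'cV[R]_k -> \bar R) (v : 'cV[R]_k) :
  (exists x, w x < +oo) -> conjv w v != -oo.
Proof.
move=> [x wx]; rewrite -ltNye; apply: (@lt_le_trans _ _ ((dotv v x)%:E - w x)).
  by case: (w x) wx => [r _| |] //=; rewrite -EFinD ltNyr.
by rewrite /conjv; apply: ereal_sup_ubound; exists x.
Qed.

End SeparableConjugate.

Section CoordinateConjugate.
Context {R : realType}.
Variables (lam : R) (h : R -> \bar R).
Hypotheses (hNy : forall y, h y != -oo) (h_convex : convex1 h) (h0 : h 0%R = 0)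
  (dom_accum0 : accum0 (dom1 h)).

Lemma conj1_ge0 v : 0 <= conj1 h v.
Proof. by apply: ereal_sup_ubound; exists 0%R; rewrite // mulr0 h0 sube0. Qed.

Lemma conj1_obj_nonzero_ge v e : (0 < e)%R ->
  exists2 y, y != 0%R & (- e)%:E <= (v * y)%:E - h y.
Proof.
move=> e0; have [x [domx [x0 _]]] := dom_accum0 1%R ltr01.
have [b hx] : exists b, h x = b%:E.
  by move: domx (hNy x); rewrite /dom1; case: (h x) => // b; exists b.
pose c := (v * x - b)%R; pose t := (e / (`|c| + e + 1))%R.
have c_ge0 := normr_ge0 c; have := ler_norm (- c); rewrite normrN => Nc_le.
have den_gt0 : (0 < `|c| + e + 1)%R by lra.
have t01 : (0 < t < 1)%R by rewrite divr_gt0 //= ltr_pdivrMr // mul1r; lra.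
have /andP[t0 _] := t01.
have tc_ge : (- e <= t * c)%R.
  have tc_le : (t * `|c| <= e)%R by rewrite mulrAC ler_pdivrMr // ler_pM2l //; lra.
  have : (t * - c <= t * `|c|)%R by rewrite ler_wpM2l // ltW.
  by rewrite mulrN; lra.
exists (t * x)%R; first by rewrite mulf_neq0 // gt_eqF.
have htx : h (t * x) <= (t * b)%:E.
  have := h_convex x 0%R t t01.
  by rewrite mulr0 addr0 h0 mule0 adde0 hx -EFinM.
apply: (@le_trans _ _ (v * (t * x) - t * b)%R%:E).
  by rewrite lee_fin; move: tc_ge; rewrite /c; lra.
by rewrite EFinB leeB.
Qed.

Lemma conj1_nonzero v :
  ereal_sup [set (v * y)%:E - h y | y in [set y | y != 0%R]] = conj1 h v.
Proof.
apply/le_anti/andP; split.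
  by apply: ereal_sup_le => _ [y _ <-]; exists y.
apply/ereal_supP => _ [y _ <-]; have [->|y0] := eqVneq y 0%R; last first.
  by apply: ereal_sup_ubound; exists y.
rewrite mulr0 h0 sube0; apply/lee_addgt0Pr => e e0.
have [z z0 obj_ge] := conj1_obj_nonzero_ge v e e0.
rewrite -leeBlDr // sub0e; apply: le_trans obj_ge _.
by apply: ereal_sup_ubound; exists z.
Qed.

Definition g_coord (z0 z1 : bool) (y : R) : \bar R :=
  (lam * (y != 0%R)%:R)%:E + h y +
  (if (z0 ==> (y == 0%R)) && (z1 ==> (y != 0%R)) then 0 else +oo).

Definition g_coord_star (z0 z1 : bool) (c : \bar R) : \bar R :=
  if z0 then 0 else if z1 then c - lam%:E else maxe (c - lam%:E) 0.

Lemma g_coord_neqNy z0 z1 y : g_coord z0 z1 y != -oo.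
Proof.
rewrite /g_coord !adde_eq_ninfty !negb_or hNy andbT /=.
by case: ifP.
Qed.

Lemma g_coord_obj z0 z1 v y : ~~ (z0 && z1) ->
  (v * y)%:E - g_coord z0 z1 y =
  if y == 0%R then (if z1 then -oo else 0)
  else if z0 then -oo else (v * y)%:E - h y - lam%:E.
Proof.
move=> z01; rewrite /g_coord; have [->|y0] := eqVneq y 0%R.
  rewrite mulr0 h0 /= implybT /= !add0e.
  by case: z1 z01 => _ //=; rewrite mulr0 !addr0 oppr0.
rewrite /= mulr1 implybT andbT.
case: z0 z01 => _ /=; first by rewrite addey ?adde_eq_ninfty ?hNy // addeNy.
by rewrite adde0 oppeD // addeA addeAC.
Qed.

Lemma conj1_g_coord z0 z1 v : ~~ (z0 && z1) ->
  conj1 (g_coord z0 z1) v = g_coord_star z0 z1 (conj1 h v).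
Proof.
move=> z01; rewrite /conj1 (funext (fun y => g_coord_obj _ _ v y z01)).
rewrite ereal_sup_if_eq /g_coord_star; case: z0 z01 => /= [z01|_].
  rewrite (negbTE z01) maxC; apply/max_idPr.
  by apply/ereal_supP => _ [y _ <-].
rewrite ereal_sup_addr conj1_nonzero.
by case: z1 => /=; rewrite ?maxNye // maxC.
Qed.

Lemma g_nu_separable n (S0 S1 : {set 'I_n}) (x : 'cV[R]_n) :
  g_nu lam h S0 S1 x = \sum_(i < n) g_coord (i \in S0) (i \in S1) (x i ord0).
Proof.
rewrite /g_nu /g_coord !big_split /=; congr (_ + _ + _).
  rewrite sumEFin -mulr_sumr -natr_sum /l0norm -sum1_card big_mkcond /=.
  by congr (_ * _%:R)%:E; apply: eq_bigr => i _; rewrite inE; case: (_ != _).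
rewrite /eta_X; case: ifPn => [/forallP etaX0|].
  by rewrite big1 // => i _; rewrite etaX0.
rewrite negb_forall => /existsP [j etaj]; rewrite (bigD1 j) //= (negbTE etaj).
rewrite addye // esum_eqNy; apply/existsP => -[k /andP[_]].
by case: ifP.
Qed.

Lemma conj_g_nu n (S0 S1 : {set 'I_n}) (v : 'cV[R]_n) : [disjoint S0 & S1] ->
  conjv (g_nu lam h S0 S1) v =
  \sum_(i < n) g_coord_star (i \in S0) (i \in S1) (conj1 h (v i ord0)).
Proof.
move=> S01; rewrite (funext (@g_nu_separable n S0 S1)).
rewrite (@conjv_separable _ n (fun i => g_coord (i \in S0) (i \in S1))).
  apply: eq_bigr => i _; apply: conj1_g_coord.
  by apply/negP => /andP[/(disjointFr S01) ->].
by move=> i y; apply: g_coord_neqNy.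
Qed.

End CoordinateConjugate.

Section Refinement.
Context {R : realType}.

Lemma maxe0_split (a : \bar R) : a != -oo -> maxe a 0 = a + maxe (- a) 0.
Proof.
case: a => [r| |] // _; last by rewrite maxye /= maxNye adde0.
have [r0|r0] := leP 0%R r.
  by rewrite max_l ?lee_fin // max_r ?adde0 // lee_fin oppr_le0.
by rewrite max_r ?lee_fin ?ltW // max_l ?subee // lee_fin oppr_ge0 ltW.
Qed.

Lemma maxe0_fin_num (a : \bar R) : a != +oo -> maxe a 0 \is a fin_num.
Proof. by case: a => [r| |] //= _; rewrite ?maxNye // -EFin_max. Qed.

Lemma g_coord_star_neqNy (lam : R) z0 z1 (c : \bar R) :
  0 <= c -> g_coord_star lam z0 z1 c != -oo.
Proof.
move=> c_ge0; have cNy : c - lam%:E != -oo by case: c c_ge0.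
rewrite /g_coord_star; case: z0 => //; case: z1 => //.
by rewrite -ltNye lt_max ltNye cNy.
Qed.

Lemma g_coord_star_refine (lam : R) (z0 z1 z0' z1' : bool) (c : \bar R) :
  0 <= c -> ~~ (z0' && z1') -> z0 ==> z0' -> z1 ==> z1' ->
  g_coord_star lam z0 z1 c =
  g_coord_star lam z0' z1' c
  + (if ~~ z0 && z0' then maxe (c - lam%:E) 0 else 0)
  + (if ~~ z1 && z1' then maxe (lam%:E - c) 0 else 0).
Proof.
move=> c_ge0; rewrite /g_coord_star.
case: z0'; case: z1'; case: z0; case: z1 => //= _ _ _.
all: rewrite ?adde0 ?add0e //.
rewrite maxe0_split; last by case: c c_ge0.
by rewrite oppeD ?fin_num_adde_defl // [- c + _]addeC -EFinN opprK.
Qed.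


Lemma sum_g_coord_star_refine {n} {S0 S1 S0' S1' : {set 'I_n}} (lam : R)
    {c : 'I_n -> \bar R} :
  (forall i, 0 <= c i) -> [disjoint S0' & S1'] ->
  S0 \subset S0' -> S1 \subset S1' ->
  \sum_(i < n) g_coord_star lam (i \in S0) (i \in S1) (c i) =
  \sum_(i < n) g_coord_star lam (i \in S0') (i \in S1') (c i)
  + \sum_(i in S0' :\: S0) maxe (c i - lam%:E) 0
  + \sum_(i in S1' :\: S1) maxe (lam%:E - c i) 0.
Proof.
move=> c_ge0 S01' sS0 sS1; rewrite !(big_mkcond (fun i => i \in _)) -!big_split.
apply: eq_bigr => i _; rewrite !inE; apply: g_coord_star_refine => //.
- by apply/negP => /andP[/(disjointFr S01') ->].
- exact/implyP/(fintype.subsetP sS0).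
- exact/implyP/(fintype.subsetP sS1).
Qed.

Lemma oppe_subeDDK (a b p q : \bar R) :
  a != -oo -> b != -oo -> 0 <= p -> q \is a fin_num ->
  (- a - (b + p + q) != -oo \/ p != +oo) ->
  - a - b = - a - (b + p + q) + p + q.
Proof.
move: a b p q => [a| |] [b| |] [p| |] [q| |] //= _ _ _ _; last by case.
by move=> _; rewrite -!EFinD; congr _%:E; lra.
Qed.

End Refinement.

Theorem proposition3p3 (R : realType) (m n : nat) (lam : R) (A : 'M[R]_(m, n))
  (f : 'cV[R]_m -> \bar R) (h : R -> \bar R)
  (S0 S1 Sb S0' S1' Sb' : {set 'I_n}) :
  (0 < lam)%R ->
  properv f -> closedv f -> convexv f ->
  proper1 h -> closed1 h -> convex1 h ->
  dom1 h 0%R -> h 0%R = 0 -> accum0 (dom1 h) ->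
  partition3 S0 S1 Sb -> partition3 S0' S1' Sb' ->
  S0 \subset S0' -> S1 \subset S1' ->
  forall u : 'cV[R]_m,
    (* the right-hand side is well defined (not of the form -oo + +oo) *)
    (D_nu A f lam h S0 S1 u != -oo \/
     \sum_(i in S0' :\: S0) phi0 lam h ((A^T *m u) i ord0) != +oo) ->
    D_nu A f lam h S0' S1' u =
      D_nu A f lam h S0 S1 u
      + \sum_(i in S0' :\: S0) phi0 lam h ((A^T *m u) i ord0)
      + \sum_(i in S1' :\: S1) phi1 lam h ((A^T *m u) i ord0).
Proof.
move=> _ [_ f_fin] _ _ [hNy _] _ h_convex _ h0 dom_accum0
  [S01 _ _ _] [S01' _ _ _] sS0 sS1 u.
rewrite /D_nu !(conj_g_nu _ _ hNy h_convex h0 dom_accum0) //.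
set c := fun i => conj1 h ((A^T *m u) i ord0).
have c_ge0 i : 0 <= c i := conj1_ge0 _ h0 _.
rewrite (sum_g_coord_star_refine lam c_ge0 S01' sS0 sS1).
apply: oppe_subeDDK; first exact: conjv_neqNy.
- rewrite esum_eqNy; apply/existsP => -[i /andP[_ /eqP]].
  exact/eqP/g_coord_star_neqNy.
- by apply: sume_ge0 => i _; rewrite le_max lexx orbT.
- apply/sum_fin_numP => i _ _; apply: maxe0_fin_num.
  by case: (c i) (c_ge0 i).
Qed.
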